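(* Let $r:E\to\mathbb R$ be continuous, bounded and non-negative, $\alpha_t=\int_0^t r(X_u)du$, and $q_r(x)=\limsup_{T\to\infty}\mathbb E^x\{\int_0^Te^{-\alpha_s}(f(X_s)-\mu(f))ds\}$. Assume (C1') $q_r$ is continuous and bounded from below; (C2') for every bounded stopping time $\sigma$ and every $x$, $q_r(x)=\mathbb E^x\{\int_0^\sigma e^{-\alpha_s}(f(X_s)-\mu(f))ds+e^{-\alpha_\sigma}q_r(X_\sigma)\}$; (C3) $\mu(f)<0$. Then for any choice of $d(x)\in(\mu(f),0)$, $$\gamma_r(x)=\sup_\tau\limsup_{T\to\infty}\mathbb E^x\Big\{\int_0^{\tau\wedge T}e^{-\alpha_s}\big(f(X_s)-d(x)\big)ds\Big\}<\infty,$$ and moreover $\gamma_r(x)\le q_r(x)-A$, where $A=\min(0,\inf_yq_r(y))$.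
   Context: $E$ is a locally compact separable metric space in which every closed ball is compact. $(X_t)$ is a right-continuous time-homogeneous (standard) Markov process on $E$ with laws $\mathbb P^x$, expectations $\mathbb E^x$, satisfying the weak Feller property and ergodicity (a unique probability measure $\mu$ with $\|P_t(x,\cdot)-\mu\|_{TV}\to0$ for all $x$); $\mu(f)=\int f\,d\mu$. $f,g$ are continuous and bounded. Stopping times may be infinite. *)

From HB Require Import structures.
From mathcomp Require Import all_boot all_order all_algebra.
From mathcomp Require Import all_classical all_reals all_analysis.
From mathcomp Require Import measurable_realfun.
Set Implicit Arguments. Unset Strict Implicit. Unset Printing Implicit Defensive.
Import Order.TTheory GRing.Theory Num.Theory.
Import numFieldNormedType.Exports.
Local Open Scope classical_set_scope.
Local Open Scope ring_scope.

(* A metric space with a distinguished point (E is nonempty in the paper,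
   since it carries the probability measure mu); the point is only needed to
   build the Borel measurable type on E. *)
#[short(type="pmetricType")]
HB.structure Definition PointedMetric (K : numDomainType) :=
  { M of Pointed M & Metric K M }.

Definition borel {E : ptopologicalType} : set (set E) := <<s @open E >>.
Definition borelT (E : ptopologicalType) := g_sigma_algebraType (@open E).

Definition separable (E : topologicalType) :=
  exists D : set E, countable D /\ dense D.
Definition closed_balls_compact {R : realType} (E : pmetricType R) :=
  forall (x : E) (e : R), compact [set y | mdist x y <= e].

Definition bdd {T : Type} {R : realType} (h : T -> R) :=
  exists M : R, forall y, `|h y| <= M.

Definition borel_fun {R : realType} {E : ptopologicalType} (h : E -> R) :=
  forall B : set R, measurable B -> borel (h @^-1` B).

Section defs.
Context {R : realType} {E : pmetricType R} {d : measure_display}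
  {Om : measurableType d}.

Definition Ex (P : probability Om R) (Y : Om -> R) : \bar R :=
  (\int[P]_w (Y w)%:E)%E.

Definition filtration (F : R -> set (set Om)) :=
  [/\ forall t, sigma_algebra setT (F t),
      forall t, F t `<=` measurable &
      forall s t, s <= t -> F s `<=` F t].

Definition right_continuous_filtration (F : R -> set (set Om)) :=
  forall t, 0 <= t -> F t = [set A | forall s, t < s -> F s A].

Definition stopping_time (F : R -> set (set Om)) : set (Om -> \bar R) :=
  [set tau | (forall w, (0 <= tau w)%E) /\
     forall t, 0 <= t -> F t [set w | (tau w <= t%:E)%E]].

Definition F_infty (F : R -> set (set Om)) : set (set Om) :=
  <<s \bigcup_(t in [set t : R | 0 <= t]) F t >>.

Definition F_at (F : R -> set (set Om)) (tau : Om -> \bar R) : set (set Om) :=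
  [set A | F_infty F A /\
     forall t, 0 <= t -> F t (A `&` [set w | (tau w <= t%:E)%E])].

(* X_tau (only meaningful on {tau < +oo}) *)
Definition Xat (X : R -> Om -> E) (tau : Om -> \bar R) (w : Om) : E :=
  X (fine (tau w)) w.

Definition Pf (X : R -> Om -> E) (P : E -> probability Om R) (t : R)
  (h : E -> R) (x : E) : R := fine (Ex (P x) (h \o X t)).

Definition standard_markov (F : R -> set (set Om)) (X : R -> Om -> E)
  (P : E -> probability Om R) :=
  filtration F /\ right_continuous_filtration F /\
   (forall t, 0 <= t -> forall B, borel B -> F t (X t @^-1` B)) /\
   (forall w t, 0 <= t -> X s w @[s --> t^'+] --> X t w) /\
   (forall x, P x [set w | X 0 w = x] = 1%E) /\
   (forall (t : R) (B : set E), 0 <= t -> borel B ->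
     forall C : set (\bar R), measurable C ->
     borel ((fun x => P x (X t @^-1` B)) @^-1` C)) /\
   (forall x s t A h, 0 <= s -> 0 <= t -> F t A -> borel_fun h -> bdd h ->
     Ex (P x) (fun w => \1_A w * h (X (t + s) w)) =
     Ex (P x) (fun w => \1_A w * Pf X P s h (X t w))) /\
   (forall x s tau A h, 0 <= s -> stopping_time F tau -> F_at F tau A ->
     borel_fun h -> bdd h ->
     Ex (P x) (fun w => \1_(A `&` [set w | (tau w < +oo)%E]) w *
                         h (X (fine (tau w) + s) w)) =
     Ex (P x) (fun w => \1_(A `&` [set w | (tau w < +oo)%E]) w *
                         Pf X P s h (Xat X tau w))) /\
   (forall x (tn : nat -> Om -> \bar R) tau,
     (forall n, stopping_time F (tn n)) -> stopping_time F tau ->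
     (forall w, {homo (fun n => tn n w) : m n / (m <= n)%N >-> (m <= n)%E}) ->
     (forall w, tn n w @[n --> \oo] --> tau w) ->
     P x [set w | (tau w < +oo)%E /\ Xat X (tn n) w @[n --> \oo] --> Xat X tau w]
     = P x [set w | (tau w < +oo)%E]).

Definition weak_feller (X : R -> Om -> E) (P : E -> probability Om R) :=
  forall t h, 0 <= t -> continuous h -> bdd h -> continuous (Pf X P t h).

Definition TVdist (nu1 nu2 : set E -> \bar R) : \bar R :=
  ereal_sup [set `|(nu1 B - nu2 B)%E|%E | B in @borel E].

Definition ergodic (X : R -> Om -> E) (P : E -> probability Om R)
  (mu : probability (borelT E) R) :=
  forall x, TVdist (fun B => P x (X t @^-1` B)) (mu : set E -> \bar R)
              @[t --> +oo] --> 0%E.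

Definition mu_of (mu : probability (borelT E) R) (f : E -> R) : R :=
  fine (\int[mu]_y (f y)%:E)%E.

Definition alpha (X : R -> Om -> E) (r : E -> R) (t : R) (w : Om) : R :=
  Rintegral lebesgue_measure `[0, t] (fun u => r (X u w)).

Definition disc_int (X : R -> Om -> E) (r g : E -> R) (t : R) (w : Om) : R :=
  Rintegral lebesgue_measure `[0, t]
    (fun s => expR (- alpha X r s w) * g (X s w)).

Definition q_r (X : R -> Om -> E) (P : E -> probability Om R)
  (mu : probability (borelT E) R) (r f : E -> R) (x : E) : \bar R :=
  limf_esup (fun T => Ex (P x) (disc_int X r (fun y => f y - mu_of mu f) T))
    (pinfty_nbhs R).

Definition gamma_r (F : R -> set (set Om)) (X : R -> Om -> E)
  (P : E -> probability Om R) (r f : E -> R) (dx : R) (x : E) : \bar R :=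
  ereal_sup [set limf_esup (fun T => Ex (P x) (fun w =>
        disc_int X r (fun y => f y - dx) (fine (Order.min (tau w) T%:E)) w))
      (pinfty_nbhs R) | tau in stopping_time F].

End defs.

From HB Require Import structures.
From mathcomp Require Import all_boot all_order all_algebra.
From mathcomp Require Import all_classical all_reals all_analysis.
From mathcomp Require Import measurable_realfun lra.
Set Implicit Arguments. Unset Strict Implicit. Unset Printing Implicit Defensive.
Import Order.TTheory GRing.Theory Num.Theory.
Import numFieldNormedType.Exports.
Local Open Scope classical_set_scope.
Local Open Scope ring_scope.

(* Fix a stopping time tau and a horizon T.  Then sigma = tau /\ T is a bounded
   stopping time, and (C2') writes q_r(x) as the expectation of the discounted
   integral of f - mu(f) up to sigma plus e^{-alpha_sigma} q_r(X_sigma).  As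
   d(x) > mu(f), the discounted integral of f - d(x) is pathwise smaller, and
   since e^{-alpha_sigma} lies in (0, 1] and A <= 0 bounds q_r from below,
   e^{-alpha_sigma} q_r(X_sigma) >= A.  Hence every expectation in the
   definition of gamma_r(x) is at most q_r(x) - A.
   Nothing is known about the measurability of these path functionals, so the
   monotonicity of the integral and the bound int (g + c) <= int g + c are
   proved for arbitrary integrands, for which mathcomp's integral is the lower
   integral built from simple functions below the integrand. *)

Ltac split_maxmin :=
  repeat match goal with
  | |- context [Num.max ?a ?b] => case: (lerP a b)
  | |- context [Num.min ?a ?b] => case: (lerP a b)
  end; move=> *; lra.

Lemma EFin_max0_ge0 (R : realType) (y : R) : (0 <= (Num.max y 0)%:E)%E.
Proof. by rewrite lee_fin le_max lexx orbT. Qed.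
Local Hint Resolve EFin_max0_ge0 : core.

Section integral_nonmeasurable.
Local Open Scope ereal_scope.
Context d (T : measurableType d) (R : realType) (mu : {measure set T -> \bar R}).
Import HBNNSimple.

Lemma ge0_le_integral_nonmeasurable (f g : T -> \bar R) :
  (forall x, 0 <= f x) -> (forall x, f x <= g x) ->
  \int[mu]_x f x <= \int[mu]_x g x.
Proof.
move=> f0 fg.
have g0 x : 0 <= g x by exact: le_trans (f0 x) (fg x).
rewrite (ge0_integralTE mu f0) (ge0_integralTE mu g0) /=.
apply: ereal_sup_le => _ [h hf <-]; exists h => //= x.
exact: le_trans (hf x) (fg x).
Qed.

Lemma le_integral_nonmeasurable (f g : T -> \bar R) :
  (forall x, f x <= g x) -> \int[mu]_x f x <= \int[mu]_x g x.
Proof.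
move=> fg; rewrite (integralE _ _ f) (integralE _ _ g).
apply: leeB; apply: ge0_le_integral_nonmeasurable.
- by move=> x; exact: funepos_ge0.
- by move=> x; rewrite !funeposE; apply: le_max2.
- by move=> x; exact: funeneg_ge0.
- by move=> x; rewrite !funenegE; apply: le_max2 => //; rewrite leeN2.
Qed.

Lemma sintegral_le_integral (h : {nnsfun T >-> R}) (f : T -> \bar R) :
  (forall x, 0 <= f x) -> (forall x, (h x)%:E <= f x) ->
  sintegral mu h <= \int[mu]_x f x.
Proof.
by move=> f0 hf; rewrite (ge0_integralTE mu f0); apply: ereal_sup_ubound; exists h.
Qed.

Lemma bounded_integral_fin_num (D : set T) (h : T -> R) (M : R) :
  measurable D -> mu D < +oo -> (forall x, D x -> `|h x| <= M)%R ->
  \int[mu]_(x in D) (h x)%:E \is a fin_num.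
Proof.
move=> mD muD hM.
have muD_fin : mu D \is a fin_num by rewrite ge0_fin_numE.
have cst_lt : \int[mu]_(x in D) (cst M%:E) x < +oo.
  by rewrite integral_cst // -(fineK muD_fin) -EFinM ltey.
have part_fin (k : T -> R) : (forall x, D x -> `|k x| <= M)%R ->
    \int[mu]_(x in D) (Num.max (k x) 0)%:E \is a fin_num.
  move=> kM; rewrite ge0_fin_numE; last by apply: integral_ge0 => x _.
  apply: le_lt_trans cst_lt.
  rewrite integral_mkcond [leRHS]integral_mkcond.
  apply: ge0_le_integral_nonmeasurable => x; rewrite /patch.
    by case: ifP.
  case: ifP => // /set_mem Dx.
  rewrite lee_fin ge_max (le_trans (ler_norm _) (kM _ Dx)).
  exact: le_trans (normr_ge0 _) (kM _ Dx).
rewrite integralE fin_numB; apply/andP; split.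
  rewrite (eq_integral (fun x => (Num.max (h x) 0)%:E)); first exact: part_fin.
  by move=> x _; rewrite funeposE EFin_max.
rewrite (eq_integral (fun x => (Num.max (- h x) 0)%:E)).
  by apply: part_fin => x Dx; rewrite normrN hM.
by move=> x _; rewrite funenegE -EFinN EFin_max.
Qed.

End integral_nonmeasurable.

Section comp_nnsfun.
Context d (T : measurableType d) (R : realType).
Import HBNNSimple.
Variables (s : {nnsfun T >-> R}) (phi : R -> R).
Hypotheses (phi_meas : measurable_fun setT phi) (phi_ge0 : forall y, 0 <= phi y).

Definition comp_nnsfun_fun : T -> R := phi \o s.
HB.instance Definition _ := FImFun.copy comp_nnsfun_fun (phi \o s).

Lemma measurable_comp_nnsfun_fun : measurable_fun setT comp_nnsfun_fun.
Proof. exact: measurableT_comp. Qed.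
HB.instance Definition _ :=
  isMeasurableFun.Build _ _ _ _ comp_nnsfun_fun measurable_comp_nnsfun_fun.

Lemma comp_nnsfun_fun_ge0 x : 0 <= comp_nnsfun_fun x.
Proof. exact: phi_ge0. Qed.
HB.instance Definition _ :=
  isNonNegFun.Build _ _ comp_nnsfun_fun comp_nnsfun_fun_ge0.

Definition comp_nnsfun : {nnsfun T >-> R} := comp_nnsfun_fun.

End comp_nnsfun.

Section excess_clip.
Variable R : realType.

Definition excess_over (c y : R) : R := Num.max (y - c) 0.
Definition clip (c y : R) : R := Num.max (Num.min y c) 0.

Lemma excess_over_ge0 c y : 0 <= excess_over c y.
Proof. by rewrite le_max lexx orbT. Qed.

Lemma clip_ge0 c y : 0 <= clip c y.
Proof. by rewrite le_max lexx orbT. Qed.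

Lemma measurable_excess_over c : measurable_fun setT (excess_over c).
Proof.
apply: measurable_maxr; last exact: measurable_cst.
by apply: measurable_funB => //; exact: measurable_cst.
Qed.

Lemma measurable_clip c : measurable_fun setT (clip c).
Proof.
apply: measurable_maxr; last exact: measurable_cst.
by apply: measurable_minr => //; exact: measurable_cst.
Qed.

Lemma excess_over_clipE c y : 0 <= c -> 0 <= y -> y = excess_over c y + clip c y.
Proof. rewrite /excess_over /clip; split_maxmin. Qed.

End excess_clip.

Lemma ereal_supD_le (R : realType) (S U : set \bar R) (k : \bar R) x0 y0 :
  S x0 -> U y0 -> (forall x, S x -> 0 <= x)%E -> (forall y, U y -> 0 <= y)%E ->
  (forall x y, S x -> U y -> x + y <= k)%E ->
  (ereal_sup S + ereal_sup U <= k)%E.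
Proof.
move=> Sx0 Uy0 S0 U0 SUk.
case: k SUk => [k||] SUk; last 2 first.
- exact: leey.
- by have := le_trans (adde_ge0 (S0 _ Sx0) (U0 _ Uy0)) (SUk _ _ Sx0 Uy0).
have U_fin y : U y -> y \is a fin_num.
  move=> Uy; rewrite ge0_fin_numE ?U0 //; apply: le_lt_trans (ltry k).
  by apply: le_trans (SUk _ _ Sx0 Uy); rewrite leeDr // S0.
have supS_le y : U y -> (ereal_sup S <= k%:E - y)%E.
  by move=> Uy; apply: ge_ereal_sup => x Sx; rewrite leeBrDr ?U_fin // SUk.
have supS_fin : ereal_sup S \is a fin_num.
  rewrite ge0_fin_numE; last exact: le_trans (S0 _ Sx0) (ereal_sup_ubound Sx0).
  apply: le_lt_trans (supS_le _ Uy0) _.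
  by rewrite -(fineK (U_fin _ Uy0)) -EFinB ltry.
rewrite -leeBrDl //; apply: ge_ereal_sup => y Uy.
by rewrite leeBrDl // -leeBrDr ?U_fin // supS_le.
Qed.

Lemma ge0_leeB_of_leeD (R : realType) (a a' b b' : \bar R) (c : R) :
  (0 <= a)%E -> (0 <= a')%E -> (0 <= b)%E -> (0 <= b')%E -> 0 <= c ->
  (b <= b' + c%:E)%E -> (a' + b <= a + b' + c%:E)%E -> (a' - b' <= a - b + c%:E)%E.
Proof.
move: a a' b b' => [a||] [a'||] [b||] [b'||] //=; rewrite ?lee_fin.
- by move=> *; lra.
- by move=> *; rewrite addeNy leNye.
- by move=> *; rewrite addeNy leNye.
- by move=> *; rewrite leey.
Qed.

Section integral_add_constant.
Local Open Scope ereal_scope.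
Context d (T : measurableType d) (R : realType).
Import HBNNSimple.

Lemma sintegral_cst (mu : {measure set T -> \bar R}) (c : R) (c0 : (0 <= c)%R) :
  sintegral mu (cst_nnsfun T (NngNum c0)) = c%:E * mu setT.
Proof.
by rewrite -(sintegral_EFin_cst mu setT (NngNum c0)) patch_setT.
Qed.

Lemma ge0_integralDcst_le (mu : {measure set T -> \bar R}) (u : T -> \bar R)
    (c : R) :
  (forall x, 0 <= u x) -> (0 <= c)%R ->
  \int[mu]_x (u x + c%:E) <= \int[mu]_x u x + c%:E * mu setT.
Proof.
move=> u0 c0.
have uc0 x : 0 <= u x + c%:E by rewrite adde_ge0.
rewrite (ge0_integralTE mu uc0) /=; apply: ge_ereal_sup => _ [h hu <-].
pose hc := comp_nnsfun h (measurable_excess_over c) (@excess_over_ge0 _ c).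
pose k := cst_nnsfun T (NngNum c0).
apply: (@le_trans _ _ (sintegral mu hc + sintegral mu k)).
  rewrite -sintegralD; apply: (@le_sintegral _ _ _ mu h (add_nnsfun hc k)) => x /=.
  by rewrite /comp_nnsfun_fun /excess_over /=; split_maxmin.
rewrite sintegral_cst leeD2r //; apply: sintegral_le_integral => // x.
rewrite /= /comp_nnsfun_fun /excess_over /=.
case: (lerP (h x - c) 0) => [_|_]; first exact: u0.
by rewrite EFinB leeBlDr //; exact: hu.
Qed.

Lemma sintegral_posD_neg_le (mu : {measure set T -> \bar R}) (g : T -> R) (c : R)
    (s t : {nnsfun T >-> R}) : (0 <= c)%R ->
  (forall x, s x <= Num.max (g x + c) 0)%R ->
  (forall x, t x <= Num.max (- g x) 0)%R ->
  sintegral mu s + sintegral mu t <=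
  \int[mu]_x (Num.max (g x) 0)%:E + \int[mu]_x (Num.max (- (g x + c)) 0)%:E
  + c%:E * mu setT.
Proof.
move=> c0 sg tg.
pose ex (h : {nnsfun T >-> R}) :=
  comp_nnsfun h (measurable_excess_over c) (@excess_over_ge0 _ c).
pose cl (h : {nnsfun T >-> R}) :=
  comp_nnsfun h (measurable_clip c) (@clip_ge0 _ c).
have split_sint (h : {nnsfun T >-> R}) :
    sintegral mu h = sintegral mu (ex h) + sintegral mu (cl h).
  rewrite -sintegralD; apply: eq_sintegral => x /=.
  by rewrite /comp_nnsfun_fun /= -excess_over_clipE // fun_ge0.
(* s lives on [g > -c] and t on [g < 0]: their parts clipped at level c
   never add up to more than c. *)
rewrite (split_sint s) (split_sint t) addeACA; apply: leeD; first apply: leeD.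
- apply: sintegral_le_integral => // x; rewrite lee_fin /= /comp_nnsfun_fun /=.
  by move: (sg x); rewrite /excess_over; split_maxmin.
- apply: sintegral_le_integral => // x; rewrite lee_fin /= /comp_nnsfun_fun /=.
  by move: (tg x); rewrite /excess_over; split_maxmin.
rewrite -sintegralD -(sintegral_cst mu c0).
apply: (@le_sintegral _ _ _ mu (add_nnsfun (cl s) (cl t))) => x /=.
rewrite /comp_nnsfun_fun /clip /=.
by move: (sg x) (tg x) (@fun_ge0 _ _ s x) (@fun_ge0 _ _ t x); split_maxmin.
Qed.

Lemma integralDcst_le (mu : {finite_measure set T -> \bar R}) (g : T -> R) (c : R) :
  (0 <= c)%R -> \int[mu]_x (g x + c)%:E <= \int[mu]_x (g x)%:E + c%:E * mu setT.
Proof.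
move=> c0.
have [k kE] : exists k : R, c%:E * mu setT = k%:E.
  by exists (fine (c%:E * mu setT)); rewrite fineK // fin_numM // fin_num_measure.
have k0 : (0 <= k)%R by rewrite -lee_fin -kE mule_ge0.
have posE (h : T -> R) :
    \int[mu]_x (fun x => (h x)%:E)^\+ x = \int[mu]_x (Num.max (h x) 0)%:E.
  by apply: eq_integral => x _; rewrite funeposE EFin_max.
have negE (h : T -> R) :
    \int[mu]_x (fun x => (h x)%:E)^\- x = \int[mu]_x (Num.max (- h x) 0)%:E.
  by apply: eq_integral => x _; rewrite funenegE -EFinN EFin_max.
have int_ge0 (h : T -> R) : 0 <= \int[mu]_x (Num.max (h x) 0)%:E.
  by apply: integral_ge0 => x _.
rewrite kE integralE [X in _ <= X + _]integralE !posE !negE.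
(* The pointwise identity (g + c)^+ + g^- = g^+ + (g + c)^- + c cannot be
   integrated termwise without measurability; the lower integral is only
   superadditive, hence the simple-function argument. *)
apply: ge0_leeB_of_leeD => //.
  rewrite -kE; apply: le_trans (ge0_integralDcst_le _ _ _) => //.
  apply: ge0_le_integral_nonmeasurable => // x.
  by rewrite -EFinD lee_fin; split_maxmin.
rewrite -kE [X in X + _ <= _](ge0_integralTE mu (fun x => EFin_max0_ge0 _)).
rewrite [X in _ + X <= _](ge0_integralTE mu (fun x => EFin_max0_ge0 _)) /=.
apply: (ereal_supD_le (x0 := sintegral mu nnsfun0) (y0 := sintegral mu nnsfun0)).
- by exists nnsfun0 => // x; rewrite /= EFin_max0_ge0.
- by exists nnsfun0 => // x; rewrite /= EFin_max0_ge0.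
- by move=> _ [h _ <-]; exact: sintegral_ge0.
- by move=> _ [h _ <-]; exact: sintegral_ge0.
- by move=> _ _ [s sg <-] [t tg <-]; apply: sintegral_posD_neg_le.
Qed.

End integral_add_constant.

Lemma limf_esup_pinfty_le (R : realType) (h : R -> \bar R) (B : \bar R) :
  (forall T, 0 <= T -> (h T <= B)%E) -> (limf_esup h (pinfty_nbhs R) <= B)%E.
Proof.
move=> hB; rewrite limf_esupE; apply: (le_trans (ereal_inf_lbound _)).
  by exists [set T | 0 <= T] => //; exists 0; split => // y /ltW.
by apply: ge_ereal_sup => _ [T T0 <-]; exact: hB.
Qed.

Section discounted_functionals.
Context (R : realType) (E : pmetricType R) (d : measure_display)
  (Om : measurableType d).

Lemma stopping_time_minr (F : R -> set (set Om)) (tau : Om -> \bar R) (T : R) :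
  filtration F -> 0 <= T -> stopping_time F tau ->
  stopping_time F (fun w => Order.min (tau w) T%:E).
Proof.
move=> [sigmaF _ _] T0 [tau0 tauF]; split.
  by move=> w; rewrite le_min tau0 lee_fin T0.
move=> t t0; case: (lerP T t) => Tt.
  have -> : [set w | (Order.min (tau w) T%:E <= t%:E)%E] = setT.
    by apply/seteqP; split => // w _ /=; rewrite ge_min lee_fin Tt orbT.
  by case: (sigmaF t) => F0 FC _; have := FC set0 F0; rewrite setD0.
have -> : [set w | (Order.min (tau w) T%:E <= t%:E)%E] =
          [set w | (tau w <= t%:E)%E].
  by apply/seteqP; split => w /=; rewrite ge_min lee_fin (leNgt T t) Tt orbF.
exact: tauF.
Qed.

Variables (X : R -> Om -> E) (r : E -> R).
Hypothesis r_ge0 : forall y, 0 <= r y.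

Lemma alpha_ge0 t w : 0 <= alpha X r t w.
Proof.
by apply: fine_ge0; apply: integral_ge0 => u _; rewrite lee_fin.
Qed.

Lemma le_disc_int_shift (f : E -> R) (c1 c2 t : R) (w : Om) :
  bdd f -> c2 <= c1 ->
  disc_int X r (fun y => f y - c1) t w <= disc_int X r (fun y => f y - c2) t w.
Proof.
move=> [fb fb_ge] c21.
pose D := (`[0, t]%classic : set R).
have itv_fin : (lebesgue_measure D < +oo)%E.
  rewrite /D lebesgue_measure_itv /=; case: ifP => _; last exact: ltey.
  by rewrite -EFinB ltey.
have integrand_bdd c s :
    `|expR (- alpha X r s w) * (f (X s w) - c)| <= fb + `|c|.
  rewrite normrM -[leRHS]mul1r; apply: ler_pM => //.
    by rewrite ger0_norm ?expR_ge0 // expR_le1 oppr_le0 alpha_ge0.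
  by apply: le_trans (ler_normB _ _) _; rewrite lerD2r.
apply: fine_le.
- by apply: bounded_integral_fin_num => // s _; exact: integrand_bdd.
- by apply: bounded_integral_fin_num => // s _; exact: integrand_bdd.
rewrite [leLHS]integral_mkcond [leRHS]integral_mkcond.
apply: le_integral_nonmeasurable => s; rewrite /patch; case: ifP => // _.
by rewrite lee_fin ler_wpM2l ?expR_ge0 // lerD2l lerN2.
Qed.

Variables (F : R -> set (set Om)) (P : E -> probability Om R) (f q : E -> R)
  (c m : R).
Hypotheses (F_filtration : filtration F) (f_bdd : bdd f).
Hypotheses (m_le0 : m <= 0) (q_ge : forall y, m <= q y).
Hypothesis q_stopped : forall (sigma : Om -> \bar R) (x : E),
  stopping_time F sigma -> (exists M : R, forall w, (sigma w <= M%:E)%E) ->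
  (q x)%:E = Ex (P x) (fun w =>
     disc_int X r (fun y => f y - c) (fine (sigma w)) w
     + expR (- alpha X r (fine (sigma w)) w) * q (X (fine (sigma w)) w)).

Lemma gamma_r_le (x : E) (dx : R) : c <= dx ->
  (gamma_r F X P r f dx x <= (q x - m)%:E)%E.
Proof.
move=> c_le_dx.
apply: ge_ereal_sup => _ [tau tau_st <-]; apply: limf_esup_pinfty_le => T T0.
set sigma := fun w => Order.min (tau w) T%:E.
have sigma_st : stopping_time F sigma by exact: stopping_time_minr.
have sigma_bdd : exists M : R, forall w, (sigma w <= M%:E)%E.
  by exists T => w; rewrite ge_min lexx orbT.
have pathwise w : disc_int X r (fun y => f y - dx) (fine (sigma w)) w <=
    disc_int X r (fun y => f y - c) (fine (sigma w)) w
    + expR (- alpha X r (fine (sigma w)) w) * q (X (fine (sigma w)) w) - m.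
  have := le_disc_int_shift (fine (sigma w)) w f_bdd c_le_dx.
  have := q_ge (X (fine (sigma w)) w).
  have e_le1 : expR (- alpha X r (fine (sigma w)) w) <= 1.
    by rewrite expR_le1 oppr_le0 alpha_ge0.
  have := expR_gt0 (- alpha X r (fine (sigma w)) w).
  by move: e_le1 m_le0; nra.
rewrite EFinB (q_stopped x sigma_st sigma_bdd) /Ex.
rewrite -(mule1 m%:E) -(probability_setT (P x)) -mulNe -EFinN.
have m_opp_ge0 : 0 <= - m by rewrite oppr_ge0.
apply: (le_trans _ (integralDcst_le (P x) _ m_opp_ge0)).
by apply: le_integral_nonmeasurable => w; rewrite lee_fin; exact: pathwise.
Qed.

End discounted_functionals.

Theorem lemma3p10 (R : realType) (E : pmetricType R)
  (E_lc : locally_compact [set: E]) (E_sep : separable E)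
  (E_balls : closed_balls_compact E)
  (d : measure_display) (Om : measurableType d)
  (F : R -> set (set Om)) (X : R -> Om -> E) (P : E -> probability Om R)
  (mu : probability (borelT E) R)
  (HX : standard_markov F X P) (Hfeller : weak_feller X P)
  (Herg : ergodic X P mu)
  (f r : E -> R)
  (f_cont : continuous f) (f_bdd : bdd f)
  (r_cont : continuous r) (r_bdd : bdd r) (r_ge0 : forall y, 0 <= r y)
  (q : E -> R)
  (* (C1') q_r is a (real-valued) continuous function, bounded from below *)
  (C1_q : forall x, q_r X P mu r f x = (q x)%:E)
  (C1_cont : continuous q) (C1_lb : exists m : R, forall y, m <= q y)
  (* (C2') *)
  (C2 : forall (sigma : Om -> \bar R) (x : E),
     stopping_time F sigma -> (exists M : R, forall w, (sigma w <= M%:E)%E) ->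
     (q x)%:E = Ex (P x) (fun w =>
        disc_int X r (fun y => f y - mu_of mu f) (fine (sigma w)) w
        + expR (- alpha X r (fine (sigma w)) w) * q (X (fine (sigma w)) w)))
  (* (C3) *)
  (C3 : mu_of mu f < 0)
  (dfun : E -> R) (Hd : forall x, mu_of mu f < dfun x < 0) :
  forall x : E,
    (gamma_r F X P r f (dfun x) x < +oo)%E /\
    (gamma_r F X P r f (dfun x) x
       <= (q x - Order.min 0 (inf (range q)))%:E)%E.
Proof.
move=> x.
have [F_filtration _] := HX.
set A := Order.min 0 (inf (range q)).
have A_le0 : A <= 0 by rewrite ge_min lexx.
have q_ge y : A <= q y.
  rewrite ge_min; apply/orP; right; apply: ge_inf; last by exists y.
  by case: C1_lb => m qm; exists m => _ [z _ <-].
have gamma_le := gamma_r_le r_ge0 F_filtration f_bdd A_le0 q_ge C2 x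
  (ltW (andP (Hd x)).1).
by split => //; apply: le_lt_trans gamma_le (ltey _).
Qed.
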